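(* Suppose that $\mathbb{M}$ is essentially finitary over a class $\mathcal{C}$ of $\mathbb{M}$-algebras. If a language $K\subseteq\mathbb{M}_\xi\Sigma$ is recognised by some morphism $\varphi:\mathbb{M}\Sigma\to\mathfrak{A}$ with $\mathfrak{A}\in\mathcal{C}$, then the syntactic congruence $\preceq_K$ is a congruence ordering on $\mathbb{M}\Sigma$.
   Context: Fix a set $\Xi$ of sorts. $\mathsf{Pos}^\Xi$: $\Xi$-sorted families of partial orders (''sets'') with sort-wise order-preserving maps. $\mathbb{M}$ is a monad on $\mathsf{Pos}^\Xi$ with multiplication $\mathrm{flat}$ and unit $\mathrm{sing}$, which preserves injective, surjective, bijective functions and preimages, and uses the standard ordering (the order on $\mathbb{M}A$ is $\{(\mathbb{M}p(u),\mathbb{M}q(u)):u\in\mathbb{M}R\}$, $R$ the order of $A$). $\mathbb{M}$-algebras $\langle A,\pi\rangle$: $\pi\circ\mathbb{M}\pi=\pi\circ\mathrm{flat}$, $\pi\circ\mathrm{sing}=\mathrm{id}$; morphisms commute with products. An alphabet is a finite unordered set $\Sigma$; $K\subseteq\mathbb{M}_\xi\Sigma$ is recognised by $\varphi$ if $K=\varphi^{-1}[P]$ for some upwards closed $P\subseteq A_\xi$. Contexts with hole of sort $\zeta$ are $p\in\mathbb{M}(\Sigma+\{\Box\})$ ($\Box$ new of sort $\zeta$), $p[s]$ is the image of $p$ under the algebra morphism extending $\Box\mapsto s$, $c\mapsto\mathrm{sing}(c)$. Syntactic congruence: $s\preceq_K t$ ($s,t$ of the same sort $\zeta$) iff $p[s]\in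 K\Rightarrow p[t]\in K$ for all contexts $p\in\mathbb{M}_\xi(\Sigma+\{\Box\})$ with hole of sort $\zeta$. A preorder $\sqsubseteq$ containing the order of $A$ is a congruence ordering on $\langle A,\pi\rangle$ if $\mathbb{M}q(s)\leq\mathbb{M}q(t)$ implies $\pi(s)\sqsubseteq\pi(t)$, where $q$ is the quotient map onto the ordered set of $\sqsubseteq$-classes. A functor on $\mathsf{Pos}^\Xi$ is finitary if it commutes with directed colimits. For monads $\langle\mathbb{M}_0,\mu_0,\varepsilon_0\rangle$, $\langle\mathbb{M}_1,\mu_1,\varepsilon_1\rangle$ on $\mathsf{Pos}^\Xi$, a morphism of monads is a natural transformation $\varrho:\mathbb{M}_0\Rightarrow\mathbb{M}_1$ with $\varepsilon_1=\varrho\circ\varepsilon_0$ and $\mu_1\circ(\varrho\circ\mathbb{M}_0\varrho)=\varrho\circ\mu_0$. For such $\varrho:\mathbb{M}^\circ\Rightarrow\mathbb{M}$ and an $\mathbb{M}$-algebra $\langle A,\pi\rangle$, its reduct is the $\mathbb{M}^\circ$-algebra $\langle A,\pi\circ\varrho\rangle$. $\varrho$ is dense over a class $\mathcal{D}$ of $\mathbb{M}$-algebras if for all $\mathfrak{A}\in\mathcal{D}$, $C\subseteq A$ and $s\in\mathbb{M}C$ there is $s^\circ\in\mathbb{M}^\circ C$ with $\pi(\varrho(s^\circ))=\pi(s)$. $\mathbb{M}$ is essentially finitary over $\mathcal{C}$ if there is a morphism of monads $\varrho:\mathbb{M}^\circ\Rightarrow\mathbb{M}$ with $\mathbb{M}^\circ$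 finitary and $\varrho$ dense over the closure of $\mathcal{C}$ under binary products. *)

From Stdlib Require Import List FunctionalExtensionality PropExtensionality
  ProofIrrelevance.

Set Implicit Arguments.
Unset Strict Implicit.

Section Defs.
Variable Xi : Type.

Unset Implicit Arguments.
Record Pos := mkPos {
  car : Xi -> Type;
  le : forall x, car x -> car x -> Prop;
  le_refl : forall x a, le x a a;
  le_trans : forall x a b c, le x a b -> le x b c -> le x a c;
  le_antisym : forall x a b, le x a b -> le x b a -> a = b }.
Set Implicit Arguments.
Arguments le p x _ _ : assert.
Arguments le_refl p {x} a.
Arguments le_trans p {x a b c} _ _.
Arguments le_antisym {p x a b} _ _.

Unset Implicit Arguments.
Record Hom (A B : Pos) := mkHom {
  fn :> forall x, car A x -> car B x;
  mono : forall x a b, le A x a b -> le B x (fn x a) (fn x b) }.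
Set Implicit Arguments.
Arguments mono {A B} h {x a b} _.
Arguments fn {A B} h x _.

Lemma Hom_ext (A B : Pos) (f g : Hom A B) :
  (forall x a, f x a = g x a) -> f = g.
Proof.
  destruct f as [f hf], g as [g hg]; simpl; intro H.
  assert (E : f = g).
  { apply functional_extensionality_dep; intro x.
    apply functional_extensionality; intro a; apply H. }
  subst g; f_equal; apply proof_irrelevance.
Qed.

Definition idH (A : Pos) : Hom A A :=
  @mkHom A A (fun x a => a) (fun x a b h => h).

Definition compH (A B C : Pos) (g : Hom B C) (f : Hom A B) : Hom A C :=
  @mkHom A C (fun x a => g x (f x a))
    (fun x a b h => mono g (mono f h)).

Definition injH (A B : Pos) (f : Hom A B) : Prop :=
  forall x a b, f x a = f x b -> a = b.
Definition surjH (A B : Pos) (f : Hom A B) : Prop :=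
  forall x b, exists a, f x a = b.

Definition subP (A : Pos) (C : forall x, car A x -> Prop) : Pos.
Proof.
  refine (@mkPos (fun x => {a : car A x | C x a})
                 (fun x u v => le A x (proj1_sig u) (proj1_sig v)) _ _ _).
  - intros x a; apply le_refl.
  - intros x a b c; apply le_trans.
  - intros x [a ha] [b hb] h1 h2; simpl in *.
    assert (E : a = b) by (apply (le_antisym h1 h2)).
    subst b; f_equal; apply proof_irrelevance.
Defined.

Definition inclH (A : Pos) (C : forall x, car A x -> Prop) : Hom (subP C) A :=
  @mkHom (subP C) A (fun x u => proj1_sig u) (fun x u v h => h).

Definition prodP (A B : Pos) : Pos.
Proof.
  refine (@mkPos (fun x => (car A x * car B x)%type)
                 (fun x u v => le A x (fst u) (fst v) /\ le B x (snd u) (snd v))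
                 _ _ _).
  - intros x a; split; apply le_refl.
  - intros x a b c [h1 h2] [h3 h4]; split; eapply le_trans; eauto.
  - intros x [a1 a2] [b1 b2] [h1 h2] [h3 h4]; simpl in *.
    f_equal; apply le_antisym; auto.
Defined.

Definition pr1H (A B : Pos) : Hom (prodP A B) A :=
  @mkHom (prodP A B) A (fun x u => fst u) (fun x u v h => proj1 h).
Definition pr2H (A B : Pos) : Hom (prodP A B) B :=
  @mkHom (prodP A B) B (fun x u => snd u) (fun x u v h => proj2 h).

Definition ordP (A : Pos) : Pos :=
  @subP (prodP A A) (fun x u => le A x (fst u) (snd u)).
Definition ordp (A : Pos) : Hom (ordP A) A := compH (pr1H A A) (inclH _).
Definition ordq (A : Pos) : Hom (ordP A) A := compH (pr2H A A) (inclH _).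

Unset Implicit Arguments.
Record Monad := {
  Mo : Pos -> Pos;
  Mmap : forall A B, Hom A B -> Hom (Mo A) (Mo B);
  Mmap_id : forall A x u, Mmap A A (idH A) x u = u;
  Mmap_comp : forall A B C (f : Hom A B) (g : Hom B C) x u,
      Mmap A C (compH g f) x u = Mmap B C g x (Mmap A B f x u);
  flat : forall A, Hom (Mo (Mo A)) (Mo A);
  sing : forall A, Hom A (Mo A);
  flat_nat : forall A B (f : Hom A B) x u,
      Mmap A B f x (flat A x u) = flat B x (Mmap _ _ (Mmap A B f) x u);
  sing_nat : forall A B (f : Hom A B) x a,
      Mmap A B f x (sing A x a) = sing B x (f x a);
  flat_sing : forall A x u, flat A x (sing (Mo A) x u) = u;
  flat_Msing : forall A x u, flat A x (Mmap _ _ (sing A) x u) = u;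
  flat_flat : forall A x u,
      flat A x (flat (Mo A) x u) = flat A x (Mmap _ _ (flat A) x u) }.
Set Implicit Arguments.

Arguments Mmap m {A B} f.

Definition preserves_injective (M : Monad) : Prop :=
  forall A B (f : Hom A B), injH f -> injH (Mmap M f).
Definition preserves_surjective (M : Monad) : Prop :=
  forall A B (f : Hom A B), surjH f -> surjH (Mmap M f).
Definition preserves_bijective (M : Monad) : Prop :=
  forall A B (f : Hom A B), injH f /\ surjH f ->
    injH (Mmap M f) /\ surjH (Mmap M f).
(* M(f^{-1}[C]) = (Mf)^{-1}[MC], with MC identified with its image in MB *)
Definition preserves_preimages (M : Monad) : Prop :=
  forall A B (f : Hom A B) (C : forall x, car B x -> Prop) x (u : car (Mo M A) x),
    (exists v : car (Mo M (subP C)) x, Mmap M (inclH C) x v = Mmap M f x u) <->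
    (exists w : car (Mo M (subP (fun y a => C y (f y a)))) x,
        Mmap M (inclH _) x w = u).
Definition standard_ordering (M : Monad) : Prop :=
  forall A x (s t : car (Mo M A) x),
    le (Mo M A) x s t <->
    exists u : car (Mo M (ordP A)) x,
      Mmap M (ordp A) x u = s /\ Mmap M (ordq A) x u = t.

Definition good_monad (M : Monad) : Prop :=
  preserves_injective M /\ preserves_surjective M /\ preserves_bijective M /\
  preserves_preimages M /\ standard_ordering M.

Unset Implicit Arguments.
Record Alg (M : Monad) := {
  acar : Pos;
  act : Hom (Mo M acar) acar;
  act_assoc : forall x u, act x (Mmap M act x u) = act x (flat M acar x u);
  act_unit : forall x a, act x (sing M acar x a) = a }.
Set Implicit Arguments.
Arguments acar {M} a : rename.
Arguments act {M} a : rename.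

Definition alg_hom (M : Monad) (A B : Pos) (piA : Hom (Mo M A) A)
  (piB : Hom (Mo M B) B) (f : Hom A B) : Prop :=
  forall x u, f x (piA x u) = piB x (Mmap M f x u).

Section ProdAlg.
Variable M : Monad.
Variables A B : Alg M.

Definition prod_act : Hom (Mo M (prodP (acar A) (acar B))) (prodP (acar A) (acar B)).
Proof.
  refine (@mkHom _ (prodP (acar A) (acar B)) (fun x u => (act A x (Mmap M (pr1H _ _) x u),
                                  act B x (Mmap M (pr2H _ _) x u))) _).
  intros x u v h; split; simpl; apply mono; apply mono; exact h.
Defined.

Lemma prod_act_assoc : forall x u,
  prod_act x (Mmap M prod_act x u) = prod_act x (flat M _ x u).
Proof.
  intros x u; simpl; f_equal.
  - rewrite <- Mmap_comp.
    assert (E : compH (pr1H (acar A) (acar B)) prod_act =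
                compH (act A) (Mmap M (pr1H _ _))) by (apply Hom_ext; reflexivity).
    rewrite E, Mmap_comp, act_assoc, flat_nat; reflexivity.
  - rewrite <- Mmap_comp.
    assert (E : compH (pr2H (acar A) (acar B)) prod_act =
                compH (act B) (Mmap M (pr2H _ _))) by (apply Hom_ext; reflexivity).
    rewrite E, Mmap_comp, act_assoc, flat_nat; reflexivity.
Qed.

Lemma prod_act_unit : forall x a, prod_act x (sing M _ x a) = a.
Proof.
  intros x [a b]; simpl; rewrite !sing_nat; simpl; rewrite !act_unit; reflexivity.
Qed.

Definition prod_alg : Alg M :=
  {| acar := prodP (acar A) (acar B); act := prod_act;
     act_assoc := prod_act_assoc; act_unit := prod_act_unit |}.
End ProdAlg.

Inductive prod_closure (M : Monad) (C : Alg M -> Prop) : Alg M -> Prop :=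
| pc_base : forall A, C A -> prod_closure C A
| pc_prod : forall A B, prod_closure C A -> prod_closure C B ->
    prod_closure C (prod_alg A B).

Definition monad_morphism (M0 M1 : Monad) (rho : forall A, Hom (Mo M0 A) (Mo M1 A))
  : Prop :=
  (forall A B (f : Hom A B) x u,
      rho B x (Mmap M0 f x u) = Mmap M1 f x (rho A x u)) /\
  (forall A x a, sing M1 A x a = rho A x (sing M0 A x a)) /\
  (forall A x u,
      flat M1 A x (rho (Mo M1 A) x (Mmap M0 (rho A) x u)) =
      rho A x (flat M0 A x u)).

Definition dense_over (M0 M1 : Monad) (rho : forall A, Hom (Mo M0 A) (Mo M1 A))
  (D : Alg M1 -> Prop) : Prop :=
  forall (A : Alg M1) (C : forall x, car (acar A) x -> Prop) x
         (s : car (Mo M1 (subP C)) x),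
    D A ->
    exists s0 : car (Mo M0 (subP C)) x,
      act A x (Mmap M1 (inclH C) x (rho _ x s0)) = act A x (Mmap M1 (inclH C) x s).

Unset Implicit Arguments.
Record Diagram := {
  dI : Type;
  dle : dI -> dI -> Prop;
  dobj : dI -> Pos;
  dmap : forall i j, dle i j -> Hom (dobj i) (dobj j) }.
Set Implicit Arguments.
Arguments dmap {d i j} _.

Definition directed (D : Diagram) : Prop :=
  (forall i, dle D i i) /\
  (forall i j k, dle D i j -> dle D j k -> dle D i k) /\
  inhabited (dI D) /\
  (forall i j, exists k, dle D i k /\ dle D j k) /\
  (forall i (h : dle D i i) x a, dmap h x a = a) /\
  (forall i j k (h1 : dle D i j) (h2 : dle D j k) (h3 : dle D i k) x a,
      dmap h3 x a = dmap h2 x (dmap h1 x a)).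

Definition cocone (D : Diagram) (C : Pos) (c : forall i, Hom (dobj D i) C) : Prop :=
  forall i j (h : dle D i j) x a, c j x (dmap h x a) = c i x a.

Definition is_colimit (D : Diagram) (C : Pos) (c : forall i, Hom (dobj D i) C)
  : Prop :=
  cocone c /\
  forall (E : Pos) (e : forall i, Hom (dobj D i) E), cocone e ->
    exists u : Hom C E,
      (forall i x a, u x (c i x a) = e i x a) /\
      (forall u' : Hom C E, (forall i x a, u' x (c i x a) = e i x a) ->
         forall x a, u' x a = u x a).

Definition mapDiagram (M : Monad) (D : Diagram) : Diagram :=
  {| dI := dI D; dle := dle D; dobj := fun i => Mo M (dobj D i);
     dmap := fun i j h => Mmap M (dmap h) |}.

Definition finitary (M : Monad) : Prop :=
  forall (D : Diagram) (C : Pos) (c : forall i, Hom (dobj D i) C),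
    directed D -> is_colimit c ->
    @is_colimit (mapDiagram M D) (Mo M C) (fun i => Mmap M (c i)).

Definition essentially_finitary (M : Monad) (CC : Alg M -> Prop) : Prop :=
  exists (M0 : Monad) (rho : forall A, Hom (Mo M0 A) (Mo M A)),
    finitary M0 /\ monad_morphism rho /\ dense_over rho (prod_closure CC).

Definition alphabet (S : Pos) : Prop :=
  (forall x a b, le S x a b <-> a = b) /\
  exists l : list {x : Xi & car S x}, forall e, In e l.

Definition upclosed (A : Pos) (x : Xi) (P : car A x -> Prop) : Prop :=
  forall a b, le A x a b -> P a -> P b.

Definition recognises (M : Monad) (S : Pos) (x : Xi) (K : car (Mo M S) x -> Prop)
  (A : Alg M) (phi : Hom (Mo M S) (acar A)) : Prop :=
  alg_hom (flat M S) (act A) phi /\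
  exists P : car (acar A) x -> Prop, upclosed P /\ forall s, K s <-> P (phi x s).

Inductive boxT (z : Xi) : Xi -> Type := Box : boxT z z.

(* Sigma + {box}, box a new letter of sort z, unordered *)
Definition holeP (S : Pos) (z : Xi) : Pos.
Proof.
  refine (@mkPos (fun x => (car S x + boxT z x)%type) (fun x a b => a = b) _ _ _).
  - reflexivity.
  - intros; congruence.
  - auto.
Defined.

Definition fillMap (M : Monad) (S : Pos) (z : Xi) (s : car (Mo M S) z)
  : Hom (holeP S z) (Mo M S).
Proof.
  refine (@mkHom (holeP S z) (Mo M S)
    (fun x a => match a with
                | inl c => sing M S x c
                | inr b => match b in boxT _ y return car (Mo M S) y with
                           | Box _ => s end
                end) _).
  intros x a b h; simpl in h; subst b; apply le_refl.
Defined.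

(* p[s] : image of p under the algebra morphism flat . M(g) extending
   box |-> s, c |-> sing c *)
Definition plug (M : Monad) (S : Pos) (z x : Xi) (p : car (Mo M (holeP S z)) x)
  (s : car (Mo M S) z) : car (Mo M S) x :=
  flat M S x (Mmap M (fillMap s) x p).

Definition syntactic (M : Monad) (S : Pos) (xi : Xi) (K : car (Mo M S) xi -> Prop)
  : forall z, car (Mo M S) z -> car (Mo M S) z -> Prop :=
  fun z s t => forall p : car (Mo M (holeP S z)) xi, K (plug p s) -> K (plug p t).

Definition preorder_above (A : Pos) (r : forall x, car A x -> car A x -> Prop)
  : Prop :=
  (forall x a, r x a a) /\ (forall x a b c, r x a b -> r x b c -> r x a c) /\
  (forall x a b, le A x a b -> r x a b).

Section Quot.
Variable A : Pos.
Unset Implicit Arguments.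
Variable r : forall x, car A x -> car A x -> Prop.
Set Implicit Arguments.
Hypothesis Hr : preorder_above r.

Definition cls (x : Xi) (a : car A x) : car A x -> Prop :=
  fun b => r x a b /\ r x b a.

Definition quotP : Pos.
Proof.
  refine (@mkPos (fun x => {X : car A x -> Prop | exists a, X = cls a})
    (fun x X Y => exists a b, proj1_sig X a /\ proj1_sig Y b /\ r x a b) _ _ _);
  destruct Hr as [Hrefl [Htrans Hle]].
  - intros x [X [a ->]]; exists a, a; simpl; unfold cls; auto.
  - intros x [X [a ->]] [Y [b ->]] [Z [c ->]]; simpl; unfold cls.
    intros [a1 [b1 [[? ?] [[? ?] ?]]]] [b2 [c2 [[? ?] [[? ?] ?]]]].
    exists a, c; repeat split; auto.
    apply Htrans with a1; auto. apply Htrans with b1; auto.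
    apply Htrans with b; auto. apply Htrans with b2; auto.
    apply Htrans with c2; auto.
  - intros x [X [a ->]] [Y [b ->]]; simpl; unfold cls.
    intros [a1 [b1 [[? ?] [[? ?] ?]]]] [b2 [a2 [[? ?] [[? ?] ?]]]].
    assert (Hab : r x a b).
    { apply Htrans with a1; auto. apply Htrans with b1; auto. }
    assert (Hba : r x b a).
    { apply Htrans with b2; auto. apply Htrans with a2; auto. }
    apply eq_sig_hprop; [intros; apply proof_irrelevance|]; simpl.
    apply functional_extensionality; intro c; apply propositional_extensionality;
      unfold cls; split; intros [? ?]; split; eauto.
Defined.

Definition quotH : Hom A quotP.
Proof.
  refine (@mkHom A quotP (fun x a => exist _ (cls a) (ex_intro _ a eq_refl)) _).
  destruct Hr as [Hrefl [Htrans Hle]].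
  intros x a b h; simpl. exists a, b; unfold cls; repeat split; auto.
Defined.
End Quot.

Definition congruence_ordering (M : Monad) (A : Pos) (pi : Hom (Mo M A) A)
  (r : forall x, car A x -> car A x -> Prop) : Prop :=
  exists H : preorder_above r,
    forall x (s t : car (Mo M A) x),
      le (Mo M (quotP H)) x (Mmap M (quotH H) x s) (Mmap M (quotH H) x t) ->
      r x (pi x s) (pi x t).

End Defs.

Arguments car {Xi} p x.
Arguments le {Xi} p x _ _.
Arguments le_refl {Xi} p {x} a.
Arguments le_trans {Xi} p {x a b c} _ _.
Arguments le_antisym {Xi p x a b} _ _.
Arguments Hom {Xi} A B.
Arguments mkHom {Xi A B} fn mono.
Arguments fn {Xi A B} h x _.
Arguments mono {Xi A B} h {x a b} _.
Arguments Mo {Xi} m A.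
Arguments Mmap {Xi} m {A B} f.
Arguments flat {Xi} m A.
Arguments sing {Xi} m A.
Arguments Alg {Xi} M.
Arguments acar {Xi M} a : rename.
Arguments act {Xi M} a : rename.
Arguments dI {Xi} d.
Arguments dle {Xi} d _ _.
Arguments dobj {Xi} d _.
Arguments dmap {Xi d i j} _.

(* Let [s <= t] denote the syntactic preorder of [K].  Replacing one occurrence of [s] by [t]
   inside an element of [M (M Sigma)] preserves [<=], because a context around a context is a
   context; by induction, so does replacing finitely many occurrences.  For arbitrary
   pointwise related [f1, f2 : D -> M Sigma], pass to the recognising algebra [A]: the image
   [C] of [<=] under [phi x phi] is a subset of [A x A], density of [rho] over [A x A] trades
   the element of [M C] for one of [M0 C], finitarity puts that on a finite stage, and there
   the finite case applies; words with the same [phi]-image are syntactically equivalent.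
   So [flat] is monotone along [<=].  By the standard ordering, an inequality in
   [M (M Sigma / <=)] lifts to [M] of the graph of [<=]; and since [Sigma], hence [M Sigma], is
   discrete, elements with equal images in [M (M Sigma / <=)] become equal after a monotone
   choice of representatives. *)

From Stdlib Require Import List FunctionalExtensionality PropExtensionality
  ProofIrrelevance ClassicalEpsilon.

Set Implicit Arguments.
Unset Strict Implicit.

Section Discrete.
Variable Xi : Type.

Lemma Mmap_ext (M : Monad Xi) (A B : Pos Xi) (f g : Hom A B) :
  (forall x a, f x a = g x a) -> forall x u, Mmap M f x u = Mmap M g x u.
Proof. intros H x u; rewrite (Hom_ext H); reflexivity. Qed.

Definition discrete (A : Pos Xi) : Prop := forall x a b, le A x a b -> a = b.

Definition discP (B : Pos Xi) : Pos Xi.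
Proof.
  refine (@mkPos Xi (car B) (fun x a b => a = b) _ _ _);
    [reflexivity | intros; congruence | auto].
Defined.

Lemma discP_discrete (B : Pos Xi) : discrete (discP B).
Proof. intros x a b h; exact h. Qed.

Lemma holeP_discrete (S : Pos Xi) z : discrete (holeP S z).
Proof. intros x a b h; exact h. Qed.

Definition discH (E B : Pos Xi) (HE : discrete E) (f : forall x, car E x -> car B x)
  : Hom E B :=
  mkHom f (fun x a b h => match HE x a b h in _ = b' return le B x (f x a) (f x b') with
                          | eq_refl => le_refl B (f x a) end).

Definition undiscH (B : Pos Xi) : Hom (discP B) B :=
  discH (B := B) (@discP_discrete B) (fun x a => a).

Lemma Mmap_undiscH_surj (M : Monad Xi) (B : Pos Xi) :
  preserves_surjective M -> surjH (Mmap M (undiscH B)).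
Proof. intro HM; apply HM; intros x b; exists b; reflexivity. Qed.

Lemma Mmap_undiscH_inj (M : Monad Xi) (B : Pos Xi) :
  preserves_injective M -> injH (Mmap M (undiscH B)).
Proof. intro HM; apply HM; intros x a b H; exact H. Qed.

Lemma Mo_discrete (M : Monad Xi) (S : Pos Xi) :
  standard_ordering M -> discrete S -> discrete (Mo M S).
Proof.
  intros Hstd HS x s t H; apply Hstd in H; destruct H as [u [<- <-]].
  apply Mmap_ext; intros y [[a b] h]; apply HS, h.
Qed.
End Discrete.

Section Update.
Variables (Xi : Type) (E : Pos Xi) (T : Xi -> Type) (z : Xi) (e0 : car E z).

Definition update (f : forall x, car E x -> T x) (v : T z) : forall x, car E x -> T x :=
  fun x e => match excluded_middle_informative (existT (car E) x e = existT (car E) z e0) with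
             | left H => eq_rect z T v x (eq_sym (f_equal (@projT1 _ _) H))
             | right _ => f x e
             end.

Lemma update_at f v : update f v e0 = v.
Proof.
  unfold update; destruct (excluded_middle_informative _) as [H|H]; [|tauto].
  rewrite (proof_irrelevance _ (eq_sym (f_equal _ H)) eq_refl); reflexivity.
Qed.

Lemma update_neq f v x (e : car E x) :
  existT (car E) x e <> existT (car E) z e0 -> update f v e = f x e.
Proof.
  intro H; unfold update; destruct (excluded_middle_informative _); [contradiction | reflexivity].
Qed.

Lemma update_ind f v (Q : forall x, car E x -> T x -> Prop) :
  Q z e0 v -> (forall x e, existT (car E) x e <> existT (car E) z e0 -> Q x e (f x e)) ->
  forall x e, Q x e (update f v e).
Proof.
  intros Hat Hne x e.
  destruct (classic (existT (car E) x e = existT (car E) z e0)) as [H|H].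
  - pose proof (f_equal (@projT1 _ _) H) as Hx; simpl in Hx; subst x.
    apply inj_pair2 in H; subst e; rewrite update_at; exact Hat.
  - rewrite update_neq by exact H; apply Hne, H.
Qed.

Lemma update_id f x (e : car E x) : update f (f z e0) e = f x e.
Proof. apply (update_ind (Q := fun x e w => w = f x e)); reflexivity. Qed.
End Update.

Section Mix.
Variables (Xi : Type) (E : Pos Xi) (T : Xi -> Type).
Unset Implicit Arguments.
Variables f1 f2 : forall x, car E x -> T x.
Set Implicit Arguments.

Definition mix (L : list {x & car E x}) : forall x, car E x -> T x :=
  fun x e => if excluded_middle_informative (In (existT (car E) x e) L) then f2 x e else f1 x e.

Lemma mix_nil x (e : car E x) : mix nil e = f1 x e.
Proof. unfold mix; destruct (excluded_middle_informative _) as [[]|]; reflexivity. Qed.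

Lemma mix_in L x (e : car E x) : In (existT (car E) x e) L -> mix L e = f2 x e.
Proof.
  intro H; unfold mix; destruct (excluded_middle_informative _); [reflexivity | contradiction].
Qed.

Lemma mix_cons z (e0 : car E z) L x (e : car E x) :
  mix (existT (car E) z e0 :: L) e = update e0 (mix L) (f2 z e0) e.
Proof.
  apply (update_ind (Q := fun x e w => mix (existT (car E) z e0 :: L) e = w)).
  - apply mix_in; left; reflexivity.
  - intros x' e' Hne; unfold mix; simpl.
    destruct (excluded_middle_informative (_ \/ _)) as [[H|H]|H];
      destruct (excluded_middle_informative (In _ L)); try reflexivity;
      [congruence | tauto | tauto].
Qed.
End Mix.

Definition finite (Xi : Type) (E : Pos Xi) : Prop :=
  exists l : list {x & car E x}, forall x e, In (existT (car E) x e) l.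

Lemma finite_of_injection (Xi : Type) (E : Pos Xi) (T : Type) (key : {x & car E x} -> T)
  (l : list T) :
  (forall s s', key s = key s' -> s = s') -> (forall s, In (key s) l) -> finite E.
Proof.
  intros Hinj Hl.
  pose (pick := fun a => match excluded_middle_informative (exists s, key s = a) with
                         | left H => proj1_sig (constructive_indefinite_description _ H) :: nil
                         | right _ => nil
                         end).
  exists (flat_map pick l); intros x e; apply in_flat_map.
  exists (key (existT _ x e)); split; [apply Hl|].
  unfold pick; destruct (excluded_middle_informative _) as [H|H]; [|exfalso; eauto].
  destruct (constructive_indefinite_description _ H) as [s Hs]; left; apply Hinj, Hs.
Qed.

Lemma colimit_jointly_surjective (Xi : Type) (D : Diagram Xi) (C : Pos Xi)
  (c : forall i, Hom (dobj D i) C) :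
  is_colimit c -> forall x a, exists i b, c i x b = a.
Proof.
  intros [Hco Hu] x a.
  set (Im := subP (A := C) (fun x a => exists i b, c i x b = a)).
  set (e := fun i => @mkHom _ (dobj D i) Im
              (fun x b => exist _ (c i x b) (ex_intro _ i (ex_intro _ b eq_refl)))
              (fun x a b h => mono (c i) h)).
  assert (He : cocone e).
  { intros i j h y b; apply (eq_sig_hprop (fun _ => proof_irrelevance _)), Hco. }
  destruct (Hu Im e He) as [uI [HuI _]].
  destruct (Hu C c Hco) as [u0 [_ Hu0]].
  (* by uniqueness, [inclH _ o uI] and the identity agree, as both factor [c] through itself *)
  assert (Hincl : forall i x b, compH (inclH _) uI x (c i x b) = c i x b).
  { intros i y b; simpl; rewrite HuI; reflexivity. }
  assert (Ha : compH (inclH _) uI x a = a).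
  { rewrite (Hu0 _ Hincl x a); exact (eq_sym (Hu0 (idH C) (fun i x b => eq_refl) x a)). }
  rewrite <- Ha; exact (proj2_sig (uI x a)).
Qed.

Section FiniteStages.
Variables (Xi : Type) (B : Pos Xi).
Unset Implicit Arguments.
Variable C : forall x, car B x -> Prop.
Set Implicit Arguments.

Definition restrict (l : list {x & car B x}) : forall x, car B x -> Prop :=
  fun x a => C x a /\ In (existT (car B) x a) l.

Definition stage_incl (l : list {x & car B x}) : Hom (subP (restrict l)) (subP C) :=
  @mkHom Xi (subP (restrict l)) (subP C)
    (fun x (u : car (subP (restrict l)) x) => exist (C x) (proj1_sig u) (proj1 (proj2_sig u)))
    (fun x u v H => H).

Definition stage_map (l1 l2 : list {x & car B x}) (h : incl l1 l2)
  : Hom (subP (restrict l1)) (subP (restrict l2)) :=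
  @mkHom Xi (subP (restrict l1)) (subP (restrict l2))
    (fun x (u : car (subP (restrict l1)) x) =>
       exist (@restrict l2 x) (proj1_sig u)
         (conj (proj1 (proj2_sig u)) (h _ (proj2 (proj2_sig u)))))
    (fun x u v H => H).

Definition finite_stages : Diagram Xi :=
  {| dI := list {x & car B x}; dle := @incl _;
     dobj := fun l => subP (restrict l); dmap := stage_map |}.

Lemma finite_stages_directed : directed finite_stages.
Proof.
  split; [|split; [|split; [|split; [|split]]]].
  - apply incl_refl.
  - intros i j k; apply incl_tran.
  - constructor; exact nil.
  - intros i j; exists (i ++ j); split; [apply incl_appl | apply incl_appr]; apply incl_refl.
  - intros i h x a; apply (eq_sig_hprop (fun _ => proof_irrelevance _)); reflexivity.
  - intros i j k h1 h2 h3 x a; apply (eq_sig_hprop (fun _ => proof_irrelevance _)); reflexivity.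
Qed.

Lemma cocone_stage_irrelevant (E : Pos Xi) (e : forall l, Hom (subP (restrict l)) E) :
  @cocone Xi finite_stages E e ->
  forall l1 l2 x (a : car (subP (restrict l1)) x) (b : car (subP (restrict l2)) x),
    proj1_sig a = proj1_sig b -> e l1 x a = e l2 x b.
Proof.
  intros He l1 l2 x a b Hab.
  transitivity (e (l1 ++ l2) x (stage_map (incl_appl _ (incl_refl _)) x a));
    [symmetry; apply (He l1 (l1 ++ l2)) |].
  transitivity (e (l1 ++ l2) x (stage_map (incl_appr _ (incl_refl _)) x b));
    [| apply (He l2 (l1 ++ l2))].
  f_equal; apply (eq_sig_hprop (fun _ => proof_irrelevance _)), Hab.
Qed.

Lemma finite_stages_colimit : @is_colimit Xi finite_stages (subP C) stage_incl.
Proof.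
  split.
  - intros i j h x a; apply (eq_sig_hprop (fun _ => proof_irrelevance _)); reflexivity.
  - intros E e He.
    pose proof (cocone_stage_irrelevant He) as Hirr.
    set (one := fun x (a : car (subP C) x) =>
           exist (@restrict (existT (car B) x (proj1_sig a) :: nil) x) (proj1_sig a)
             (conj (proj2_sig a) (or_introl eq_refl))).
    assert (Hmono : forall x a b,
               le (subP C) x a b -> le E x (e _ x (one x a)) (e _ x (one x b))).
    { intros x a b Hab.
      pose (l := existT (car B) x (proj1_sig a) :: existT (car B) x (proj1_sig b) :: nil).
      pose (a' := exist (@restrict l x) (proj1_sig a)
                    (conj (proj2_sig a) (or_introl eq_refl))).
      pose (b' := exist (@restrict l x) (proj1_sig b)
                    (conj (proj2_sig b) (or_intror (or_introl eq_refl)))).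
      assert (Ea : e _ x (one x a) = e l x a') by (apply Hirr; reflexivity).
      assert (Eb : e _ x (one x b) = e l x b') by (apply Hirr; reflexivity).
      rewrite Ea, Eb; apply (mono (e l)), Hab. }
    exists (mkHom (fun x a => e _ x (one x a)) Hmono); split.
    + intros l x a; apply Hirr; reflexivity.
    + intros u' Hu' x a.
      transitivity (u' x (stage_incl _ x (one x a))); [| apply Hu'].
      f_equal; apply (eq_sig_hprop (fun _ => proof_irrelevance _)); reflexivity.
Qed.

Lemma restrict_finite l : finite (subP (restrict l)).
Proof.
  apply (@finite_of_injection _ (subP (restrict l)) _
           (fun s => existT (car B) (projT1 s) (proj1_sig (projT2 s))) l).
  - intros [x [a ha]] [x' [a' ha']] H; simpl in H.
    pose proof (f_equal (@projT1 _ _) H) as Hx; simpl in Hx; subst x'.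
    apply inj_pair2 in H; subst a'; f_equal.
    apply (eq_sig_hprop (fun _ => proof_irrelevance _)); reflexivity.
  - intros [x [a Ha]]; exact (proj2 Ha).
Qed.

Lemma finitary_finite_stage (M0 : Monad Xi) : finitary M0 ->
  forall y (s : car (Mo M0 (subP C)) y),
    exists l (r : car (Mo M0 (subP (restrict l))) y), Mmap M0 (stage_incl l) y r = s.
Proof.
  intros Hfin y s.
  exact (colimit_jointly_surjective
           (Hfin _ _ _ finite_stages_directed finite_stages_colimit) s).
Qed.
End FiniteStages.

Section Quotient.
Variables (Xi : Type) (A : Pos Xi).
Unset Implicit Arguments.
Variable r : forall x, car A x -> car A x -> Prop.
Set Implicit Arguments.
Hypothesis Hr : preorder_above r.

Lemma quotH_of_mem x (a : car A x) (c : car (quotP Hr) x) :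
  proj1_sig c a -> quotH Hr x a = c.
Proof.
  pose proof Hr as [_ [Htrans _]].
  destruct c as [X [b ->]]; intros [Hba Hab].
  apply (eq_sig_hprop (fun _ => proof_irrelevance _)); simpl.
  apply functional_extensionality; intro c; apply propositional_extensionality.
  unfold cls; split; intros [H1 H2]; split; eauto.
Qed.

Definition graphP : Pos Xi := subP (A := prodP A A) (fun x ab => r x (fst ab) (snd ab)).
Definition graph1 : Hom graphP A := compH (pr1H A A) (inclH _).
Definition graph2 : Hom graphP A := compH (pr2H A A) (inclH _).

Definition graph_quot : Hom graphP (ordP (quotP Hr)) :=
  let refl := proj1 Hr in
  @mkHom _ graphP (ordP (quotP Hr))
    (fun x ab => exist _ (quotH Hr x (graph1 x ab), quotH Hr x (graph2 x ab))
       (ex_intro _ (graph1 x ab) (ex_intro _ (graph2 x ab)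
          (conj (conj (refl _ _) (refl _ _))
                (conj (conj (refl _ _) (refl _ _)) (proj2_sig ab))))))
    (fun x a b H => conj (mono (quotH Hr) (proj1 H)) (mono (quotH Hr) (proj2 H))).

Lemma graph_quot_surj : surjH graph_quot.
Proof.
  intros x [[X Y] h]; pose proof h as h'; destruct h' as [a [b [Ha [Hb Hab]]]].
  exists (exist _ (a, b) Hab).
  apply (eq_sig_hprop (fun _ => proof_irrelevance _)); simpl.
  f_equal; apply quotH_of_mem; assumption.
Qed.

Lemma Mquot_le_lift (M : Monad Xi) :
  preserves_surjective M -> standard_ordering M ->
  forall x (s t : car (Mo M A) x),
    le (Mo M (quotP Hr)) x (Mmap M (quotH Hr) x s) (Mmap M (quotH Hr) x t) ->
    exists w : car (Mo M graphP) x,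
      Mmap M (quotH Hr) x (Mmap M graph1 x w) = Mmap M (quotH Hr) x s /\
      Mmap M (quotH Hr) x (Mmap M graph2 x w) = Mmap M (quotH Hr) x t.
Proof.
  intros Hsurj Hstd x s t Hle.
  apply Hstd in Hle; destruct Hle as [u [Hu1 Hu2]].
  destruct (Hsurj _ _ _ graph_quot_surj x u) as [w <-].
  exists w; rewrite <- Hu1, <- Hu2, <- !Mmap_comp; split; apply Mmap_ext; reflexivity.
Qed.

Lemma Mquot_normal_form (M : Monad Xi) :
  discrete A -> preserves_injective M ->
  exists nu : Hom A A,
    (forall x a, r x a (nu x a) /\ r x (nu x a) a) /\
    (forall x (u v : car (Mo M A) x),
       Mmap M (quotH Hr) x u = Mmap M (quotH Hr) x v -> Mmap M nu x u = Mmap M nu x v).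
Proof.
  intros HA Hinj.
  (* a choice of representatives is not monotone, but [nu] is since [A] is discrete *)
  pose (repr := fun x (c : car (quotP Hr) x) =>
                  proj1_sig (constructive_indefinite_description _ (proj2_sig c))).
  pose (qd := discH (B := discP (quotP Hr)) HA (fun x a => quotH Hr x a)).
  pose (rd := discH (B := A) (@discP_discrete _ (quotP Hr)) repr).
  exists (compH rd qd); split.
  - intros x a; simpl; unfold repr.
    destruct (constructive_indefinite_description _ _) as [b Hb]; simpl in *.
    assert (Hbb : cls r b b) by (split; apply (proj1 Hr)).
    rewrite <- Hb in Hbb; exact Hbb.
  - intros x u v Huv.
    assert (Hq : Mmap M qd x u = Mmap M qd x v).
    { apply (Mmap_undiscH_inj (B := quotP Hr) Hinj); rewrite <- !Mmap_comp.
      transitivity (Mmap M (quotH Hr) x u); [apply Mmap_ext; reflexivity|].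
      rewrite Huv; apply Mmap_ext; reflexivity. }
    rewrite !Mmap_comp, Hq; reflexivity.
Qed.
End Quotient.

Section Contexts.
Variables (Xi : Type) (M : Monad Xi) (S : Pos Xi).
Hypothesis HS : discrete S.

Definition plugH z (s : car (Mo M S) z) : Hom (Mo M (holeP S z)) (Mo M S) :=
  compH (flat M S) (Mmap M (fillMap s)).

Lemma plug_flat z (s : car (Mo M S) z) x (v : car (Mo M (Mo M (holeP S z))) x) :
  plug (flat M _ x v) s = flat M S x (Mmap M (plugH s) x v).
Proof. unfold plug, plugH; rewrite flat_nat, flat_flat, Mmap_comp; reflexivity. Qed.

Definition inlH z : Hom S (holeP S z) :=
  discH (B := holeP S z) HS (fun x c => inl c).

Lemma plug_inl z (s : car (Mo M S) z) x (u : car (Mo M S) x) :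
  plug (Mmap M (inlH z) x u) s = u.
Proof.
  unfold plug; rewrite <- Mmap_comp.
  rewrite (Mmap_ext (f := compH (fillMap s) (inlH z)) (g := sing M S) (fun _ _ => eq_refl)).
  apply flat_Msing.
Qed.

Lemma plug_box z (s : car (Mo M S) z) : plug (sing M (holeP S z) z (inr (Box z))) s = s.
Proof. unfold plug; rewrite sing_nat; apply flat_sing. Qed.

Definition ctx_substH y z (u : car (Mo M (holeP S z)) y)
  : Hom (holeP S y) (Mo M (holeP S z)) :=
  discH (B := Mo M (holeP S z)) (@holeP_discrete _ S y)
    (fun x a => match a with
                | inl c => sing M (holeP S z) x (inl c)
                | inr b => match b in boxT _ w return car (Mo M (holeP S z)) w with
                           | Box _ => u end
                end).

Definition ctx_compose y z x (p : car (Mo M (holeP S y)) x) (u : car (Mo M (holeP S z)) y)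
  : car (Mo M (holeP S z)) x :=
  flat M _ x (Mmap M (ctx_substH u) x p).

Lemma plug_ctx_compose y z x (p : car (Mo M (holeP S y)) x)
  (u : car (Mo M (holeP S z)) y) (s : car (Mo M S) z) :
  plug (ctx_compose p u) s = plug p (plug u s).
Proof.
  unfold ctx_compose; rewrite plug_flat, <- Mmap_comp.
  unfold plug at 1; f_equal; apply Mmap_ext.
  intros w [c|[]]; simpl; [unfold plugH; simpl; rewrite sing_nat; apply flat_sing | reflexivity].
Qed.

Variables (xi : Xi) (K : car (Mo M S) xi -> Prop).

Lemma syntactic_refl z (s : car (Mo M S) z) : syntactic K s s.
Proof. intros p H; exact H. Qed.

Lemma syntactic_trans z (s t u : car (Mo M S) z) :
  syntactic K s t -> syntactic K t u -> syntactic K s u.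
Proof. intros H1 H2 p H; auto. Qed.

Lemma syntactic_preorder : standard_ordering M -> preorder_above (syntactic K).
Proof.
  intro Hstd; split; [|split].
  - intros x; apply syntactic_refl.
  - intros x; apply syntactic_trans.
  - intros x s t H; rewrite (Mo_discrete Hstd HS H); apply syntactic_refl.
Qed.

Section Substitution.
Variables (E : Pos Xi) (HE : discrete E).

Lemma syntactic_update z (e0 : car E z) (g : forall x, car E x -> car (Mo M S) x)
  (s t : car (Mo M S) z) y (r : car (Mo M E) y) :
  syntactic K s t ->
  syntactic K (flat M S y (Mmap M (discH HE (update e0 g s)) y r))
              (flat M S y (Mmap M (discH HE (update e0 g t)) y r)).
Proof.
  intros Hst p.
  (* [u] is [r] with the hole at [e0], so [p[flat (M (update e0 g v) r)] = (ctx_compose p u)[v]] *)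
  pose (hole := discH (B := Mo M (holeP S z)) HE
                  (update e0 (fun x e => Mmap M (inlH z) x (g x e))
                     (sing M (holeP S z) z (inr (Box z))))).
  pose (u := flat M _ y (Mmap M hole y r)).
  assert (Hu : forall v, plug u v = flat M S y (Mmap M (discH HE (update e0 g v)) y r)).
  { intro v; unfold u; rewrite plug_flat, <- Mmap_comp; f_equal; apply Mmap_ext.
    intros x e; simpl.
    apply (update_ind (Q := fun x e w => plugH v x w = update e0 g v e)).
    - rewrite update_at; apply plug_box.
    - intros x' e' Hne; rewrite update_neq by exact Hne; apply plug_inl. }
  rewrite <- !Hu, <- !plug_ctx_compose; apply Hst.
Qed.

Lemma syntactic_flat_mono_finite (f1 f2 : Hom E (Mo M S)) :
  finite E -> (forall x e, syntactic K (f1 x e) (f2 x e)) ->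
  forall y (r : car (Mo M E) y),
    syntactic K (flat M S y (Mmap M f1 y r)) (flat M S y (Mmap M f2 y r)).
Proof.
  intros [l Hl] Hf y r.
  pose (mixH := fun L => discH (B := Mo M S) HE (mix f1 f2 L)).
  assert (Hmix : forall L, syntactic K (flat M S y (Mmap M f1 y r))
                                       (flat M S y (Mmap M (mixH L) y r))).
  { induction L as [|[z e0] L IH].
    - rewrite (Mmap_ext (f := mixH nil) (g := f1) (fun x e => mix_nil f1 f2 e)).
      apply syntactic_refl.
    - rewrite (Mmap_ext (f := mixH L) (g := discH HE (update e0 (mix f1 f2 L) (mix f1 f2 L e0)))
                 (fun x e => eq_sym (update_id e0 (mix f1 f2 L) e))) in IH.
      rewrite (Mmap_ext (f := mixH (existT _ z e0 :: L))
                 (g := discH HE (update e0 (mix f1 f2 L) (f2 z e0)))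
                 (fun x e => mix_cons f1 f2 e0 L e)).
      apply (syntactic_trans IH), syntactic_update.
      unfold mix; destruct (excluded_middle_informative _); [apply syntactic_refl | apply Hf]. }
  rewrite (Mmap_ext (f := f2) (g := mixH l) (fun x e => eq_sym (mix_in f1 f2 (Hl x e)))).
  apply Hmix.
Qed.
End Substitution.
End Contexts.

Section Recognised.
Variables (Xi : Type) (M : Monad Xi) (S : Pos Xi) (xi : Xi) (K : car (Mo M S) xi -> Prop).
Hypothesis HS : discrete S.
Variables (A : Alg M) (phi : Hom (Mo M S) (acar A)) (P : car (acar A) xi -> Prop).
Hypothesis phi_hom : alg_hom (flat M S) (act A) phi.
Hypothesis K_phi : forall s, K s <-> P (phi xi s).

Lemma syntactic_of_phi_eq z (s t : car (Mo M S) z) : phi z s = phi z t -> syntactic K s t.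
Proof.
  intros Hst p; rewrite !K_phi.
  assert (E : phi xi (plug p s) = phi xi (plug p t)).
  { unfold plug; rewrite !phi_hom, <- !Mmap_comp; f_equal; apply Mmap_ext.
    intros x [c|[]]; simpl; [reflexivity | exact Hst]. }
  rewrite E; auto.
Qed.

Definition syntactic_image : forall x, car (prodP (acar A) (acar A)) x -> Prop :=
  fun x ab => exists s t, phi x s = fst ab /\ phi x t = snd ab /\ syntactic K s t.

Hypothesis M_surj : preserves_surjective M.

Lemma syntactic_image_closed_finite l y (r : car (Mo M (subP (restrict syntactic_image l))) y) :
  @syntactic_image y (act (prod_alg A A) y (Mmap M (inclH _) y r)).
Proof.
  set (E := subP (restrict syntactic_image l)).
  destruct (Mmap_undiscH_surj (B := E) M_surj r) as [rd <-].
  assert (Hpre : forall x (e : car E x),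
             {st | phi x (fst st) = fst (proj1_sig e) /\ phi x (snd st) = snd (proj1_sig e) /\
                   syntactic K (fst st) (snd st)}).
  { intros x e; apply constructive_indefinite_description.
    destruct (proj1 (proj2_sig e)) as [s [t H]]; exists (s, t); exact H. }
  pose (f1 := discH (B := Mo M S) (@discP_discrete _ E) (fun x e => fst (proj1_sig (Hpre x e)))).
  pose (f2 := discH (B := Mo M S) (@discP_discrete _ E) (fun x e => snd (proj1_sig (Hpre x e)))).
  exists (flat M S y (Mmap M f1 y rd)), (flat M S y (Mmap M f2 y rd)); split; [|split].
  - rewrite phi_hom; simpl; rewrite <- !Mmap_comp.
    apply f_equal, Mmap_ext; intros x e; apply (proj2_sig (Hpre x e)).
  - rewrite phi_hom; simpl; rewrite <- !Mmap_comp.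
    apply f_equal, Mmap_ext; intros x e; apply (proj2_sig (Hpre x e)).
  - apply syntactic_flat_mono_finite;
      [exact HS | apply discP_discrete | apply (restrict_finite syntactic_image l) |].
    intros x e; apply (proj2_sig (Hpre x e)).
Qed.

Variables (M0 : Monad Xi) (rho : forall B, Hom (Mo M0 B) (Mo M B)).
Hypothesis rho_nat :
  forall B B' (f : Hom B B') x u, rho B' x (Mmap M0 f x u) = Mmap M f x (rho B x u).
Hypothesis M0_finitary : finitary M0.

Lemma syntactic_image_closed_rho y (s : car (Mo M0 (subP syntactic_image)) y) :
  @syntactic_image y (act (prod_alg A A) y (Mmap M (inclH _) y (rho _ y s))).
Proof.
  destruct (finitary_finite_stage M0_finitary s) as [l [r <-]].
  rewrite rho_nat, <- Mmap_comp.
  rewrite (Mmap_ext (f := compH (inclH _) (stage_incl _ l)) (g := inclH _)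
             (fun _ _ => eq_refl)).
  apply syntactic_image_closed_finite.
Qed.

Variable CC : Alg M -> Prop.
Hypothesis rho_dense : dense_over rho (prod_closure CC).
Hypothesis A_in_CC : CC A.

Lemma syntactic_image_closed y (s : car (Mo M (subP syntactic_image)) y) :
  @syntactic_image y (act (prod_alg A A) y (Mmap M (inclH _) y s)).
Proof.
  destruct (@rho_dense (prod_alg A A) _ _ s (pc_prod (pc_base A_in_CC) (pc_base A_in_CC)))
    as [s0 Hs0].
  exact (eq_ind _ (@syntactic_image y) (syntactic_image_closed_rho s0) _ Hs0).
Qed.

Lemma syntactic_flat_mono (D : Pos Xi) (f1 f2 : Hom D (Mo M S)) :
  (forall x d, syntactic K (f1 x d) (f2 x d)) ->
  forall y (w : car (Mo M D) y),
    syntactic K (flat M S y (Mmap M f1 y w)) (flat M S y (Mmap M f2 y w)).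
Proof.
  intros Hf y w.
  pose (h := @mkHom Xi D (subP syntactic_image)
         (fun x d => exist _ (phi x (f1 x d), phi x (f2 x d))
            (ex_intro _ (f1 x d) (ex_intro _ (f2 x d) (conj eq_refl (conj eq_refl (Hf x d))))))
         (fun x a b H => conj (mono phi (mono f1 H)) (mono phi (mono f2 H)))).
  destruct (syntactic_image_closed (Mmap M h y w)) as [s [t [Hs [Ht Hst]]]].
  assert (E1 : phi y (flat M S y (Mmap M f1 y w)) = phi y s).
  { rewrite Hs, phi_hom; simpl; rewrite <- !Mmap_comp.
    apply f_equal, Mmap_ext; reflexivity. }
  assert (E2 : phi y t = phi y (flat M S y (Mmap M f2 y w))).
  { rewrite Ht, phi_hom; simpl; rewrite <- !Mmap_comp.
    apply f_equal, Mmap_ext; reflexivity. }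
  exact (syntactic_trans (syntactic_of_phi_eq E1)
           (syntactic_trans Hst (syntactic_of_phi_eq E2))).
Qed.

Lemma syntactic_flat_of_Mquot_eq (Hpo : preorder_above (syntactic K)) :
  standard_ordering M -> preserves_injective M ->
  forall y (a b : car (Mo M (Mo M S)) y),
    Mmap M (quotH Hpo) y a = Mmap M (quotH Hpo) y b ->
    syntactic K (flat M S y a) (flat M S y b).
Proof.
  intros Hstd Hinj y a b Hab.
  destruct (Mquot_normal_form Hpo (Mo_discrete Hstd HS) Hinj) as [nu [Hnu HMnu]].
  pose proof (syntactic_flat_mono (f1 := idH _) (f2 := nu) (w := a)
                (fun x d => proj1 (Hnu x d))) as Ha.
  pose proof (syntactic_flat_mono (f1 := nu) (f2 := idH _) (w := b)
                (fun x d => proj2 (Hnu x d))) as Hb.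
  rewrite Mmap_id, (HMnu y a b Hab) in Ha; rewrite Mmap_id in Hb.
  exact (syntactic_trans Ha Hb).
Qed.
End Recognised.

Theorem theorem4p14 (Xi : Type) (M : Monad Xi) (CC : Alg M -> Prop)
  (S : Pos Xi) (xi : Xi) (K : car (Mo M S) xi -> Prop) :
  good_monad M ->
  essentially_finitary CC ->
  alphabet S ->
  (exists (A : Alg M) (phi : Hom (Mo M S) (acar A)), CC A /\ recognises K phi) ->
  congruence_ordering (flat M S) (syntactic K).
Proof.
  intros [Hinj [Hsurj [_ [_ Hstd]]]] [M0 [rho [Hfin [[Hnat _] Hdense]]]] [HS _]
         [A [phi [HA [Hphi [P [_ HK]]]]]].
  assert (HSd : discrete S) by (intros x a b; apply HS).
  pose (Hpo := syntactic_preorder HSd K Hstd).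
  pose proof (syntactic_flat_mono HSd Hphi HK Hsurj Hnat Hfin Hdense HA) as Hmono.
  pose proof (syntactic_flat_of_Mquot_eq HSd Hphi HK Hsurj Hnat Hfin Hdense HA
                (Hpo := Hpo) Hstd Hinj) as Hquot.
  exists Hpo; intros x s t Hle.
  destruct (Mquot_le_lift Hsurj Hstd Hle) as [w [Hs Ht]].
  apply (syntactic_trans (Hquot _ _ _ (eq_sym Hs))).
  apply (syntactic_trans
           (Hmono _ (graph1 (syntactic K)) (graph2 (syntactic K)) (fun x d => proj2_sig d) _ w)).
  exact (Hquot _ _ _ Ht).
Qed.
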